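(* Let $\mu,\mu_2$ be the first and second moments of some probability distribution on $[0,1]$, and set $\sigma^2=\mu_2-\mu^2$. Let $\mathcal{D}$ be the set of probability distributions on $[0,1]$ with $E(X)=\mu$ and $E(X^2)=\mu_2$. For a distribution $F$ write $F(x)=P(X\le x)$ and $F_{-}(x)=P(X<x)$ for $X\sim F$. Fix $x\in(0,1)$ and define $\mu_2^*$ as follows: - if $x\le\mu$, let $F_1$ be the distribution on $\{x,1\}$ with $P(X=x)=(1-\mu)/(1-x)$ and $P(X=1)=1-(1-\mu)/(1-x)$; $\mu_2^*$ is its second moment, with variance $\sigma_*^2=(1-\mu)(\mu-x)$; - if $x>\mu$, let $F_2$ be the distribution on $\{0,x\}$ with $P(X=x)=\mu/x$ and $P(X=0)=1-\mu/x$; $\mu_2^*$ is its second moment, with variance $\sigma_*^2=x(x-\mu)$. Suppose $\mu_2\ge\mu_2^*$. Let $F_4$ be the distribution supported on $\{0,x,1\}$ satisfying both moment constraints. Its masses are $$P(X=x)=p_4=\frac{\mu-\mu_2}{x-x^2},\qquad P(X=1)=\mu-xp_4,\qquad P(X=0)=1-p_4-P(X=1).$$ Then for every $G\in\mathcal{D}$ we have $G(x)\le F_4(x)$ and $G_{-}(x)\ge F_{4-}(x)$. That is, $F_4$ maximizes $F(x)$ and minimizes $F_{-}(x)$ subject to the moment constraints.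
   Context: This setting models a single histogram bucket rescaled to $[0,1]$, for which the mean $\mu$ and the second moment $\mu_2$ of the observations in the bucket are known. *)

From HB Require Import structures.
From mathcomp Require Import all_boot all_order all_algebra.
From mathcomp Require Import all_classical all_reals all_analysis.
Set Implicit Arguments. Unset Strict Implicit. Unset Printing Implicit Defensive.
Import Order.TTheory GRing.Theory Num.Theory.
Local Open Scope classical_set_scope.
Local Open Scope ring_scope.

Definition moment_dist (R : realType) (mu mu2 : R) (G : probability R R) : Prop :=
  [/\ G `[0%R, 1%R]%classic = 1%E,
      (\int[G]_(y in `[0%R, 1%R]%classic) (y%:E) = mu%:E)%E &
      (\int[G]_(y in `[0%R, 1%R]%classic) ((y ^+ 2)%:E) = mu2%:E)%E].

Definition mu2star (R : realType) (mu x : R) : R :=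
  if x <= mu then
    x ^+ 2 * ((1 - mu) / (1 - x)) + 1 ^+ 2 * (1 - (1 - mu) / (1 - x))
  else x ^+ 2 * (mu / x) + 0 ^+ 2 * (1 - mu / x).

Definition p4x (R : realType) (mu mu2 x : R) : R := (mu - mu2) / (x - x ^+ 2).
Definition p41 (R : realType) (mu mu2 x : R) : R := mu - x * p4x mu mu2 x.
Definition p40 (R : realType) (mu mu2 x : R) : R :=
  1 - p4x mu mu2 x - p41 mu mu2 x.

Definition F4 (R : realType) (mu mu2 x : R) (A : set R) : \bar R :=
  ((p40 mu mu2 x)%:E * \d_(0%R : R) A + (p4x mu mu2 x)%:E * \d_(x : R) A
   + (p41 mu mu2 x)%:E * \d_(1%R : R) A)%E.

Definition dist_le (R : realType) (F : set R -> \bar R) (x : R) : \bar R :=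
  F `]-oo, x]%classic.
Definition dist_lt (R : realType) (F : set R -> \bar R) (x : R) : \bar R :=
  F `]-oo, x[%classic.

From HB Require Import structures.
From mathcomp Require Import all_boot all_order all_algebra.
From mathcomp Require Import all_classical all_reals all_analysis.
From mathcomp Require Import measurable_realfun ring lra.
Import Order.TTheory GRing.Theory Num.Theory.
Import numFieldNormedType.Exports.
Local Open Scope classical_set_scope.
Local Open Scope ring_scope.

(* The indicator of ]-oo, x] is dominated on [0, 1] by the quadratic
   q(y) = 1 + (x y - y^2) / (1 - x), which equals 1 at 0 and at x and vanishes
   at 1; the indicator of ]-oo, x[ dominates l(y) = (x - y)(1 - y) / x, which
   equals 1 at 0 and vanishes at x and at 1.  Integrating against any G with the
   prescribed moments gives G(x) <= E[q] and G_(x) >= E[l], and these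
   expectations only depend on mu and mu2.  Since F4 is carried by {0, x, 1},
   where q and l coincide with the respective indicators, E[q] = F4(x) and
   E[l] = F4_(x). *)

Lemma finite_measure_continuous_compact_integrable (R : realType)
    (mu : {finite_measure set R -> \bar R}) (f : R -> R) (A : set R) :
  compact A -> {within A, continuous f} -> mu.-integrable A (EFin \o f).
Proof.
move=> cptA ctsfA; have mA := compact_measurable cptA.
apply: measurable_bounded_integrable => //.
- by rewrite -ge0_fin_numE// fin_num_measure.
- exact: subspace_continuous_measurable_fun.
- have /compact_bounded[M [_ mrt]] := continuous_compact ctsfA cptA.
  by exists M; split; rewrite ?num_real // => ? ? ? ?; exact: mrt.
Qed.

Lemma measure_setI_nullC d (T : measurableType d) (R : realType)
    (mu : {measure set T -> \bar R}) (A D : set T) :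
  measurable A -> measurable D -> mu (~` D) = 0%E -> mu A = mu (A `&` D).
Proof.
move=> mA mD muD0; rewrite (measureDI mu mA mD).
by rewrite (subset_measure0 (measurableD mA mD) (measurableC mD) _ muD0) ?add0e.
Qed.

Section moment_dist.
Context {R : realType} {mu mu2 : R} {G : probability R R}.
Hypothesis hG : moment_dist mu mu2 G.
Let I : set R := `[0%R, 1%R].
Let mI : measurable I. Proof. exact: measurable_itv. Qed.

Let integrable_continuous (f : R -> R) :
  continuous f -> G.-integrable I (EFin \o f).
Proof.
move=> cf; apply: finite_measure_continuous_compact_integrable.
- exact: segment_compact.
- exact: continuous_subspaceT.
Qed.

Let integrable_id : G.-integrable I (fun y => y%:E).
Proof. by apply: (@integrable_continuous id) => t; exact: cvg_id. Qed.

Let integrable_sqr : G.-integrable I (fun y => (y ^+ 2)%:E).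
Proof. exact/integrable_continuous/exprn_continuous. Qed.

Let integrable_const (a : R) : G.-integrable I (fun=> a%:E).
Proof. exact: finite_measure_integrable_cst. Qed.

Let quadraticE (a b c : R) :
  (fun y => (a + b * y + c * y ^+ 2)%:E) =
  (fun y => a%:E + b%:E * y%:E + c%:E * (y ^+ 2)%:E)%E.
Proof. by apply/funext => y; rewrite !EFinD !EFinM. Qed.

Let integrable_affine (a b : R) :
  G.-integrable I (fun y => a%:E + b%:E * y%:E)%E.
Proof. by apply: integrableD => //; exact: integrableZl. Qed.

Let integrable_quadratic (a b c : R) :
  G.-integrable I (fun y => (a + b * y + c * y ^+ 2)%:E).
Proof.
by rewrite quadraticE; apply: integrableD => //; exact: integrableZl.
Qed.

Lemma moment_dist_quadratic (a b c : R) :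
  (\int[G]_(y in I) (a + b * y + c * y ^+ 2)%:E = (a + b * mu + c * mu2)%:E)%E.
Proof.
case: hG => GI1 Gmu Gmu2; rewrite quadraticE.
rewrite integralD //; last exact: integrableZl.
rewrite integralD //; last exact: integrableZl.
by rewrite integral_cst // !integralZl //= GI1 Gmu Gmu2 mule1 -!EFinM -!EFinD.
Qed.

Lemma moment_dist_measureE (A : set R) : measurable A ->
  G A = (\int[G]_(y in I) (\1_A y)%:E)%E.
Proof.
case: hG => GI1 _ _ mA; rewrite integral_indic //.
have GIc : G (~` I) = 0%E by rewrite probability_setC //= GI1 subee.
exact: measure_setI_nullC.
Qed.

Let integrable_indicI (A : set R) : measurable A ->
  G.-integrable I (fun y => (\1_A y)%:E).
Proof. by move=> mA; apply: (integrableS measurableT) => //; exact: integrable_indic. Qed.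

Lemma moment_dist_le_quadratic (A : set R) (a b c : R) : measurable A ->
  (forall y, 0 <= y <= 1 -> \1_A y <= a + b * y + c * y ^+ 2) ->
  (G A <= (a + b * mu + c * mu2)%:E)%E.
Proof.
move=> mA hle; rewrite moment_dist_measureE // -moment_dist_quadratic.
apply: le_integral => //; first exact: integrable_indicI.
by move=> y; rewrite /I mem_setE in_itv => /hle; rewrite lee_fin.
Qed.

Lemma moment_dist_ge_quadratic (A : set R) (a b c : R) : measurable A ->
  (forall y, 0 <= y <= 1 -> a + b * y + c * y ^+ 2 <= \1_A y) ->
  ((a + b * mu + c * mu2)%:E <= G A)%E.
Proof.
move=> mA hge; rewrite moment_dist_measureE // -moment_dist_quadratic.
apply: le_integral => //; first exact: integrable_indicI.
by move=> y; rewrite /I mem_setE in_itv => /hge; rewrite lee_fin.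
Qed.

End moment_dist.

Section bounding_quadratics.
Context {R : realType} {x : R}.
Hypothesis x01 : 0 < x < 1.

Lemma indic_itvNyc_le_quadratic (y : R) : 0 <= y <= 1 ->
  \1_`]-oo, x] y <= 1 + x / (1 - x) * y + - (1 - x)^-1 * y ^+ 2.
Proof.
case/andP: x01 => x0 x1 /andP[y0 y1].
have x1' : 0 < 1 - x by rewrite subr_gt0.
rewrite indicE mem_setE in_itv /=; case: (leP y x) => hxy /=.
- have -> : 1 + x / (1 - x) * y + - (1 - x)^-1 * y ^+ 2 =
            1 + y * (x - y) / (1 - x) by field; rewrite gt_eqF.
  by rewrite lerDl divr_ge0 ?mulr_ge0 ?subr_ge0 // ltW.
- have -> : 1 + x / (1 - x) * y + - (1 - x)^-1 * y ^+ 2 =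
            (1 - y) * (1 + y - x) / (1 - x) by field; rewrite gt_eqF.
  by rewrite divr_ge0 ?mulr_ge0 ?subr_ge0 // ?ltW //; lra.
Qed.

Lemma quadratic_le_indic_itvNyo (y : R) : 0 <= y <= 1 ->
  1 + - ((1 + x) / x) * y + x^-1 * y ^+ 2 <= \1_`]-oo, x[ y.
Proof.
case/andP: x01 => x0 x1 /andP[y0 y1].
rewrite indicE mem_setE in_itv /=; case: (ltP y x) => hyx /=.
- have -> : 1 + - ((1 + x) / x) * y + x^-1 * y ^+ 2 =
            1 - y * (1 + x - y) / x by field; rewrite gt_eqF.
  by rewrite gerBl divr_ge0 ?mulr_ge0 // ?ltW //; lra.
- have -> : 1 + - ((1 + x) / x) * y + x^-1 * y ^+ 2 =
            - ((y - x) * (1 - y) / x) by field; rewrite gt_eqF.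
  by rewrite oppr_le0 divr_ge0 ?mulr_ge0 ?subr_ge0 // ltW.
Qed.

End bounding_quadratics.

Section F4_values.
Context {R : realType} {mu mu2 x : R}.
Hypothesis x01 : 0 < x < 1.

Let x_neq0 : x != 0. Proof. by case/andP: x01 => x0 _; rewrite gt_eqF. Qed.
Let onemx_neq0 : 1 - x != 0. Proof. by case/andP: x01 => _ x1; rewrite subr_eq0 gt_eqF. Qed.
Let x_onemx_neq0 : x - x ^+ 2 != 0.
Proof. by rewrite expr2 -{1}(mulr1 x) -mulrBr mulf_neq0. Qed.

Lemma dist_le_F4 :
  dist_le (F4 mu mu2 x) x = (1 + x / (1 - x) * mu + - (1 - x)^-1 * mu2)%:E.
Proof.
case/andP: x01 => x0 x1.
rewrite /dist_le /F4 !diracE !mem_setE !in_itv /= lexx (ltW x0) (lt_geF x1).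
rewrite !mule1 mule0 adde0 -EFinD /p40 /p41 /p4x; congr EFin; field.
by rewrite x_onemx_neq0 onemx_neq0.
Qed.

Lemma dist_lt_F4 :
  dist_lt (F4 mu mu2 x) x = (1 + - ((1 + x) / x) * mu + x^-1 * mu2)%:E.
Proof.
case/andP: x01 => x0 x1.
rewrite /dist_lt /F4 !diracE !mem_setE !in_itv /= x0 ltxx (lt_gtF x1).
rewrite mule1 !mule0 !adde0 /p40 /p41 /p4x; congr EFin; field.
by rewrite x_onemx_neq0 x_neq0.
Qed.

End F4_values.

Theorem mainTheorem3 (R : realType) (mu mu2 x : R) :
  (exists P : probability R R, moment_dist mu mu2 P) ->
  0 < x < 1 ->
  mu2star mu x <= mu2 ->
  forall G : probability R R, moment_dist mu mu2 G ->
    (dist_le G x <= dist_le (F4 mu mu2 x) x)%E /\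
    (dist_lt (F4 mu mu2 x) x <= dist_lt G x)%E.
Proof.
(* The existence of a distribution and mu2star mu x <= mu2 only make the
   masses of F4 nonnegative; the two inequalities hold without them. *)
move=> _ x01 _ G hG; rewrite dist_le_F4 // dist_lt_F4 //; split.
- apply: (moment_dist_le_quadratic hG); first exact: measurable_itv.
  exact: indic_itvNyc_le_quadratic.
- apply: (moment_dist_ge_quadratic hG); first exact: measurable_itv.
  exact: quadratic_le_indic_itvNyo.
Qed.
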